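(* For every Cantor set $C\subset\mathbb{R}$ and every $\varepsilon\in(0,1)$, $$(1-\varepsilon)^2\le\frac{\tau_\varepsilon(C)}{\tau(C)}\le 1 .$$ In particular $\lim_{\varepsilon\to0}\tau_\varepsilon(C)=\tau(C)$.
   Context: A Cantor set is a non-empty compact, perfect, totally disconnected subset of $\mathbb{R}$; its gaps are the bounded connected components of its complement. For $\varepsilon\ge0$ and $u$ the right endpoint of a gap $G$ of a Cantor set $K$, the $\varepsilon$-bridge is $B_\varepsilon(u)=(u,\ell(\widetilde G))$, where $\widetilde G$ is the gap of $K$ to the right of $u$ with $|\widetilde G|\ge(1-\varepsilon)|G|$ such that every gap $\widehat G\subset(u,\ell(\widetilde G))$ satisfies $|\widehat G|<(1-\varepsilon)|G|$, and $\ell(\widetilde G)$ is the left endpoint of $\widetilde G$ (if no such gap exists, the bridge extends to $\max K$); $\varepsilon$-bridges at left endpoints of gaps are defined symmetrically. The $\varepsilon$-thickness is $\tau_\varepsilon(K)=\inf_u|B_\varepsilon(u)|/|G|$, the infimum over all gap endpoints $u$, and $\tau(K)=\tau_0(K)$ is the Newhouse thickness. *)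

From HB Require Import structures.
From mathcomp Require Import all_boot all_order all_algebra.
From mathcomp Require Import all_classical all_reals all_analysis.
Set Implicit Arguments. Unset Strict Implicit. Unset Printing Implicit Defensive.
Import Order.TTheory GRing.Theory Num.Theory.
Import numFieldNormedType.Exports.
Local Open Scope classical_set_scope.
Local Open Scope ring_scope.

Section Thickness.
Variable R : realType.
Implicit Types (K G H : set R) (eps u v : R).

Definition cantor_set K :=
  [/\ K !=set0, compact K, perfect_set K & totally_disconnected K].

Definition is_gap K G :=
  bounded_set G /\ exists x, (~` K) x /\ G = connected_component (~` K) x.

Definition lgap G := inf G.
Definition rgap G := sup G.
Definition glen G := sup G - inf G.

(* [rbridge_end K eps G v]: v is the right end of the eps-bridge B_eps(u)
   at the right endpoint u = rgap G of the gap G, i.e. B_eps(u) = (u, v). *)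
Definition rbridge_cond K eps G H :=
  [/\ is_gap K H, H `<=` [set x | rgap G < x],
      (1 - eps) * glen G <= glen H &
      forall H', is_gap K H' -> H' `<=` [set x | rgap G < x < lgap H] ->
        glen H' < (1 - eps) * glen G].

Definition rbridge_end K eps G v :=
  (exists H, rbridge_cond K eps G H /\ v = lgap H) \/
  ((~ exists H, rbridge_cond K eps G H) /\ v = sup K).

(* symmetric: eps-bridge B_eps(u) = (v, u) at the left endpoint u = lgap G *)
Definition lbridge_cond K eps G H :=
  [/\ is_gap K H, H `<=` [set x | x < lgap G],
      (1 - eps) * glen G <= glen H &
      forall H', is_gap K H' -> H' `<=` [set x | rgap H < x < lgap G] ->
        glen H' < (1 - eps) * glen G].

Definition lbridge_end K eps G v :=
  (exists H, lbridge_cond K eps G H /\ v = rgap H) \/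
  ((~ exists H, lbridge_cond K eps G H) /\ v = inf K).

Definition bridge_ratios K eps : set R :=
  [set r | exists G v, is_gap K G /\
     ((rbridge_end K eps G v /\ r = (v - rgap G) / glen G) \/
      (lbridge_end K eps G v /\ r = (lgap G - v) / glen G))].

(* eps-thickness; thickness K 0 is the Newhouse thickness *)
Definition thickness K eps : R := inf (bridge_ratios K eps).

End Thickness.

From HB Require Import structures.
From mathcomp Require Import all_boot all_order all_algebra.
From mathcomp Require Import all_classical all_reals all_analysis.
From mathcomp Require Import lra.
Import Order.TTheory GRing.Theory Num.Theory.
Import numFieldNormedType.Exports.
Local Open Scope classical_set_scope.
Local Open Scope ring_scope.

(* The eps-bridge at the right end u of a gap G stops at the first gap to the
   right of length at least (1 - eps)|G|, which comes no later than the first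
   gap of length at least |G| where the Newhouse bridge stops; hence
   tau_eps <= tau.  Conversely, let the eps-bridge stop at the gap H.  If
   |H| >= |G|, it is also the Newhouse bridge at u.  If |H| < |G|, every gap
   between G and H is shorter than (1 - eps)|G| <= |H|, so the Newhouse bridge
   at the left end of H is the same interval, and its length is at least
   tau |H| >= (1 - eps) tau |G|.  This gives (1 - eps) tau <= tau_eps, which
   is stronger than the claimed bound, and the limit follows by squeezing.
   Bridges at left endpoints are reduced to right ones by the reflection
   x |-> -x. *)

Section Thickness.
Context {R : realType}.
Implicit Types (A K G H : set R) (a b u c x y : R).

(** * Reflection in the origin *)

Lemma bounded_setN {A} : bounded_set A -> bounded_set (-%R @` A).
Proof.
move=> [M [? AM]]; exists M; split=> // N MN _ [x Ax <-].
by rewrite /= normrN; exact: AM.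
Qed.

Lemma bounded_set_has_ubound {A} : bounded_set A -> has_ubound A.
Proof.
move=> [M [_ AM]]; exists (M + 1) => x Ax.
by rewrite (le_trans (ler_norm _)) //; apply: (AM (M + 1)); rewrite ?ltrDl.
Qed.

Lemma bounded_set_has_lbound {A} : bounded_set A -> has_lbound A.
Proof. by move=> /bounded_setN/bounded_set_has_ubound/has_lb_ubN. Qed.

Lemma setCN A : ~` (-%R @` A) = -%R @` (~` A).
Proof.
apply/seteqP; split=> x.
  by move=> nAx; exists (- x); rewrite ?opprK //= memNE opprK.
by move=> [y nAy <-] [z Az /oppr_inj zy]; apply: nAy; rewrite -zy.
Qed.

Lemma is_intervalN A : is_interval A -> is_interval (-%R @` A).
Proof.
move=> iA _ _ [x Ax <-] [y Ay <-] z /andP[yz zx].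
rewrite -[z]opprK -memNE; apply: (iA y x) => //.
by rewrite lerNr zx lerNl yz.
Qed.

Lemma connected_componentN_sub A x :
  -%R @` connected_component A x `<=` connected_component (-%R @` A) (- x).
Proof.
move=> _ [y [C [Cx CA cC] Cy] <-]; exists (-%R @` C); last by exists y.
split; [by exists x | exact: image_subset |].
exact/connected_intervalP/is_intervalN/connected_intervalP.
Qed.

Lemma connected_componentN A x :
  connected_component (-%R @` A) (- x) = -%R @` connected_component A x.
Proof.
apply/seteqP; split; last exact: connected_componentN_sub.
rewrite -[X in X `<=` _]setNK; apply: image_subset.
by have := connected_componentN_sub (-%R @` A) (- x); rewrite setNK opprK.
Qed.

Lemma is_gapN {K G} : is_gap K G -> is_gap (-%R @` K) (-%R @` G).
Proof.
move=> [bG [x [nKx EG]]]; split; first exact: bounded_setN.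
by exists (- x); rewrite EG setCN connected_componentN -memNE.
Qed.

Lemma is_gapNE K G : is_gap (-%R @` K) (-%R @` G) = is_gap K G.
Proof. by apply/propext; split=> [/is_gapN|/is_gapN //]; rewrite !setNK. Qed.

Lemma supN A : sup (-%R @` A) = - inf A.
Proof. by rewrite /inf opprK. Qed.

Lemma infN A : inf (-%R @` A) = - sup A.
Proof. by rewrite /inf setNK. Qed.

Lemma lgapN G : lgap (-%R @` G) = - rgap G.
Proof. exact: infN. Qed.

Lemma rgapN G : rgap (-%R @` G) = - lgap G.
Proof. exact: supN. Qed.

Lemma glenN G : glen (-%R @` G) = glen G.
Proof. rewrite /glen supN infN; lra. Qed.

Lemma subset_setN_gt A a :
  (-%R @` A `<=` [set x | a < x]) = (A `<=` [set x | x < - a]).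
Proof.
apply/propext; split=> sA x; last by move=> [y /sA /=]; rewrite ltrNr => ? <-.
by move=> Ax; rewrite /= ltrNr; apply: sA; exists x.
Qed.

Lemma subset_setN_itv A a b :
  (-%R @` A `<=` [set x | a < x < b]) = (A `<=` [set x | - b < x < - a]).
Proof.
apply/propext; split=> sA x.
  move=> Ax; have /andP[? ?] : a < - x < b by apply: sA; exists x.
  by apply/andP; split; lra.
by move=> [y /sA /andP[? ?] <-]; apply/andP; split; lra.
Qed.

(** * Gaps of a closed set *)

Lemma glenE G : glen G = rgap G - lgap G.
Proof. by []. Qed.

Lemma gap_subC {K G} : is_gap K G -> G `<=` ~` K.
Proof. by move=> [_ [x [_ ->]]]; exact: connected_component_sub. Qed.

Lemma gap_nonempty {K G} : is_gap K G -> G !=set0.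
Proof.
by move=> [_ [x [nKx ->]]]; exists x; exact: connected_component_refl.
Qed.

Lemma gap_is_interval {K G} : is_gap K G -> is_interval G.
Proof.
by move=> [_ [x [_ ->]]]; apply/connected_intervalP/component_connected.
Qed.

Lemma gap_has_sup {K G} : is_gap K G -> has_sup G.
Proof.
move=> gG; split; first exact: (gap_nonempty gG).
exact: (bounded_set_has_ubound gG.1).
Qed.

Lemma gap_has_lbound {K G} : is_gap K G -> has_lbound G.
Proof. by move=> gG; exact: (bounded_set_has_lbound gG.1). Qed.

Lemma gap_lb {K G u} : is_gap K G -> G `<=` [set x | u < x] -> u <= lgap G.
Proof. by move=> gG uG; apply: lb_le_inf (gap_nonempty gG) _ => x /uG /ltW. Qed.

Lemma gap_rgap_mem {K G} : closed K -> is_gap K G -> K (rgap G).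
Proof.
move=> cK gG; have [_ [x [nKx EG]]] := gG.
have Gx : G x by rewrite EG; exact: connected_component_refl.
have xr : x <= rgap G := sup_upper_bound (gap_has_sup gG) Gx.
(* Else a ball around rgap G misses K and [x, rgap G + e/2] lies in G. *)
apply: contrapT => nKr.
have : nbhs (rgap G) (~` K).
  by apply: open_nbhs_nbhs; split => //; exact: closed_openC.
move=> /nbhs_ballP[e e0 eK]; have e2 : 0 < e / 2 by rewrite divr_gt0.
have : [set` `[x, rgap G + e / 2]] `<=` G.
  rewrite [X in _ `<=` X]EG; apply: connected_component_max.
  - by rewrite /= in_itv /= lexx /=; lra.
  - move=> y; rewrite /= in_itv /= => /andP[xy ye].
    have [yr|ry] := ltP y (rgap G).
      have [g Gg yg] := sup_gt (gap_nonempty gG) yr.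
      apply: (gap_subC gG); apply: (gap_is_interval gG x g) => //.
      by rewrite xy ltW.
    by apply: eK; rewrite -ball_normE /= ler0_norm ?subr_le0 //; lra.
  - exact/connected_intervalP/interval_is_interval.
move=> /(_ (rgap G + e / 2)) Ge.
suff : rgap G + e / 2 <= rgap G by lra.
apply: (sup_upper_bound (gap_has_sup gG)); apply: Ge.
by rewrite /= in_itv /=; apply/andP; split; lra.
Qed.

Lemma gap_lgap_mem {K G} : closed K -> is_gap K G -> K (lgap G).
Proof.
move=> cK /is_gapN /(gap_rgap_mem (closedN cK)).
by rewrite rgapN -memNE.
Qed.

Lemma gapP {K G} : closed K -> is_gap K G ->
  forall y, G y <-> lgap G < y < rgap G.
Proof.
move=> cK gG y; split=> [Gy | /andP[ly yr]].
  have nKy := gap_subC gG _ Gy.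
  rewrite !lt_neqAle (ge_inf (gap_has_lbound gG) Gy).
  rewrite (sup_upper_bound (gap_has_sup gG) Gy) !andbT.
  apply/andP; split; apply/eqP => Ey; apply: nKy.
    by rewrite -Ey; exact: gap_lgap_mem.
  by rewrite Ey; exact: gap_rgap_mem.
have [g1 Gg1 g1y] := inf_lt (gap_nonempty gG) ly.
have [g2 Gg2 yg2] := sup_gt (gap_nonempty gG) yr.
by apply: (gap_is_interval gG g1 g2) => //; rewrite !ltW.
Qed.

Lemma glen_gt0 {K G} : closed K -> is_gap K G -> 0 < glen G.
Proof.
move=> cK gG; have [x /(gapP cK gG) /andP[lx xr]] := gap_nonempty gG.
by rewrite glenE; lra.
Qed.

Lemma gap_disjoint {K H1 H2} : closed K -> is_gap K H1 -> is_gap K H2 ->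
  lgap H1 < lgap H2 -> rgap H1 <= lgap H2.
Proof.
move=> cK gH1 gH2 l12; rewrite leNgt; apply/negP => l21.
apply: (gap_subC gH1 (lgap H2)); last exact: gap_lgap_mem.
by apply/(gapP cK gH1); rewrite l12 l21.
Qed.

Lemma exists_leftmost_gap {K} (P : set (set R)) c : closed K -> 0 < c ->
  (forall H, P H -> is_gap K H /\ c <= glen H) ->
  P !=set0 -> has_lbound [set lgap H | H in P] ->
  exists2 H, P H & forall H', P H' -> lgap H <= lgap H'.
Proof.
move=> cK c0 Plong P0 Plb; set S := [set lgap H | H in P].
have S0 : S !=set0 by case: P0 => H PH; exists (lgap H), H.
have infS H : P H -> inf S <= lgap H.
  by move=> PH; apply: (ge_inf Plb); exists H.
suff [H PH EH] : S (inf S) by exists H => // H' /infS; rewrite EH.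
(* Points of S are c apart: (l, l + c) misses K, hence S, for l in S. *)
apply: contrapT => nSi.
have [_ [H1 PH1 <-] l1c] : exists2 l, S l & l < inf S + c.
  by apply: inf_lt; rewrite ?ltrDl.
have i1 : inf S < lgap H1.
  rewrite lt_neqAle infS // andbT; apply/eqP => E.
  by apply: nSi; rewrite E; exists H1.
have [_ [H2 PH2 <-] l21] := inf_lt S0 i1.
have [gH1 _] := Plong _ PH1; have [gH2 cH2] := Plong _ PH2.
have i2 := infS _ PH2; rewrite glenE in cH2.
apply: (gap_subC gH2 (lgap H1)); last exact: gap_lgap_mem.
by apply/(gapP cK gH2); apply/andP; split; lra.
Qed.

Lemma exists_first_long_gap {K u c} : closed K -> 0 < c ->
  (exists H, [/\ is_gap K H, H `<=` [set x | u < x] & c <= glen H]) ->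
  exists H, [/\ is_gap K H, H `<=` [set x | u < x], c <= glen H &
    forall H', is_gap K H' -> H' `<=` [set x | u < x < lgap H] -> glen H' < c].
Proof.
move=> cK c0 [H0 longH0].
pose P := [set H | [/\ is_gap K H, H `<=` [set x | u < x] & c <= glen H]].
have [|||H [gH uH cH] Hmin] := @exists_leftmost_gap K P c cK c0.
- by move=> H [].
- by exists H0.
- by exists u => _ [H [gH uH _] <-]; exact: (gap_lb gH uH).
exists H; split => // H' gH' H'H; rewrite ltNge; apply/negP => cH'.
have [y H'y] := gap_nonempty gH'.
have /andP[_ yH] := H'H _ H'y.
have /(gapP cK gH') /andP[ly _] := H'y.
have : lgap H <= lgap H' by apply: Hmin; split => // z /H'H /andP[].
lra.
Qed.

Definition rbridge_ratios K eps : set R :=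
  [set r | exists G v,
    [/\ is_gap K G, rbridge_end K eps G v & r = (v - rgap G) / glen G]].

Definition lbridge_ratios K eps : set R :=
  [set r | exists G v,
    [/\ is_gap K G, lbridge_end K eps G v & r = (lgap G - v) / glen G]].

Lemma bridge_ratiosE K eps :
  bridge_ratios K eps = rbridge_ratios K eps `|` lbridge_ratios K eps.
Proof.
apply/seteqP; split=> r.
  by move=> [G [v [gG [[? ->]|[? ->]]]]]; [left|right]; exists G, v.
move=> [[G [v [gG ? ->]]]|[G [v [gG ? ->]]]].
  by exists G, v; split=> //; left.
by exists G, v; split=> //; right.
Qed.

Lemma bridge_ratios_nonempty {K G} eps :
  is_gap K G -> bridge_ratios K eps !=set0.
Proof.
move=> gG; have [[H HG]|nH] := pselect (exists H, rbridge_cond K eps G H).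
  exists ((lgap H - rgap G) / glen G), G, (lgap H).
  by split=> //; left; split=> //; left; exists H.
exists ((sup K - rgap G) / glen G), G, (sup K).
by split=> //; left; split=> //; right.
Qed.

Lemma thickness_nogap K eps : ~ (exists G, is_gap K G) -> thickness K eps = 0.
Proof.
move=> nG; rewrite /thickness (_ : bridge_ratios K eps = set0) ?inf0 //.
by rewrite -subset0 => r [G [v [gG _]]]; apply: nG; exists G.
Qed.

Lemma lbridge_condN K eps G H :
  lbridge_cond K eps G H <-> rbridge_cond (-%R @` K) eps (-%R @` G) (-%R @` H).
Proof.
rewrite /lbridge_cond /rbridge_cond is_gapNE rgapN lgapN !glenN.
rewrite subset_setN_gt opprK.
split=> -[gH HG cH Hmin]; split=> // H' gH' H'G.
  rewrite -(setNK H') glenN; apply: Hmin; first by rewrite -is_gapNE setNK.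
  by rewrite subset_setN_itv.
by rewrite -glenN; apply: Hmin; rewrite ?is_gapNE // subset_setN_itv !opprK.
Qed.

Lemma exists_lbridge_condN K eps G :
  (exists H, lbridge_cond K eps G H) <->
  (exists H, rbridge_cond (-%R @` K) eps (-%R @` G) H).
Proof.
split=> -[H HG]; exists (-%R @` H); first exact/lbridge_condN.
by apply/lbridge_condN; rewrite setNK.
Qed.

Lemma lbridge_endN K eps G v :
  lbridge_end K eps G v <-> rbridge_end (-%R @` K) eps (-%R @` G) (- v).
Proof.
split=> [[[H [HG ->]] | [nH ->]] | [[H [HG Ev]] | [nH Ev]]].
- by left; exists (-%R @` H); rewrite lgapN; split => //; exact/lbridge_condN.
- by right; rewrite supN -exists_lbridge_condN.
- left; exists (-%R @` H); rewrite rgapN -Ev opprK; split=> //.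
  by apply/lbridge_condN; rewrite setNK.
- by right; rewrite exists_lbridge_condN -[v]opprK Ev supN opprK.
Qed.

Lemma lbridge_ratiosN K eps :
  lbridge_ratios K eps = rbridge_ratios (-%R @` K) eps.
Proof.
apply/seteqP; split=> _ [G [v [gG Gv ->]]].
  exists (-%R @` G), (- v); split; [exact: is_gapN | exact/lbridge_endN |].
  by rewrite rgapN glenN; congr (_ / _); lra.
exists (-%R @` G), (- v); split; first by rewrite -is_gapNE setNK.
  by apply/lbridge_endN; rewrite !setNK opprK.
by rewrite lgapN glenN; congr (_ / _); lra.
Qed.

Lemma bridge_ratiosN K eps : bridge_ratios (-%R @` K) eps = bridge_ratios K eps.
Proof. by rewrite !bridge_ratiosE !lbridge_ratiosN setNK setUC. Qed.

(** * Right eps-bridges versus Newhouse bridges *)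

Lemma rbridge_ratio_ge0 {K} eps r : closed K -> has_ubound K ->
  rbridge_ratios K eps r -> 0 <= r.
Proof.
move=> cK ubK [G [v [gG Gv ->]]].
rewrite divr_ge0 ?(ltW (glen_gt0 cK gG)) // subr_ge0.
case: Gv => [[H [[gH HG _ _] ->]] | [_ ->]]; first exact: (gap_lb gH HG).
by apply: (ub_le_sup ubK); exact: (gap_rgap_mem cK gG).
Qed.

Lemma exists_rbridge_cond_le {K} eps' eps G : closed K -> is_gap K G ->
  eps' <= eps -> eps < 1 ->
  (exists H, rbridge_cond K eps' G H) -> exists H, rbridge_cond K eps G H.
Proof.
move=> cK gG le_eps eps1 [H0 [gH0 H0G cH0 _]].
have G0 := glen_gt0 cK gG.
have c0 : 0 < (1 - eps) * glen G by apply: mulr_gt0; rewrite // subr_gt0.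
have [|H Hc] := @exists_first_long_gap K (rgap G) _ cK c0; last by exists H.
by exists H0; split=> //; apply: le_trans cH0; rewrite ler_pM2r // lerD2l lerN2.
Qed.

Lemma rbridge_cond0 {K} eps G H : closed K -> is_gap K G -> 0 <= eps ->
  rbridge_cond K eps G H -> glen G <= glen H -> rbridge_cond K 0 G H.
Proof.
move=> cK gG eps0 [gH HG _ Hmin] GH; split; rewrite ?subr0 ?mul1r //.
move=> H' gH' H'H; apply: lt_le_trans (Hmin _ gH' H'H) _.
by rewrite ler_piMl ?(ltW (glen_gt0 cK gG)) // lerBlDr lerDl.
Qed.

Lemma lbridge_cond0_of_rbridge {K} eps G H : closed K -> is_gap K G ->
  rbridge_cond K eps G H -> glen H < glen G -> lbridge_cond K 0 H G.
Proof.
move=> cK gG [gH HG cH Hmin] HG'; split; rewrite ?subr0 ?mul1r.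
- exact: gG.
- move=> y /(gapP cK gG) /andP[_ yr]; have := gap_lb gH HG; rewrite /=; lra.
- exact: ltW.
- by move=> H' gH' H'GH; apply: lt_le_trans (Hmin _ gH' H'GH) cH.
Qed.

Lemma rbridge_ratio_lower {K} eps t r : closed K -> 0 < eps < 1 -> 0 <= t ->
  lbound (bridge_ratios K 0) t -> rbridge_ratios K eps r -> (1 - eps) * t <= r.
Proof.
move=> cK /andP[eps0 eps1] t0 tlb [G [v [gG Gv ->]]].
have G0 := glen_gt0 cK gG.
have tle : (1 - eps) * t <= t by rewrite ler_piMl // lerBlDr lerDl ltW.
case: Gv => [[H [Hc ->]] | [nH ->]].
- have [gH HG cH _] := Hc.
  have [GH|HG'] := leP (glen G) (glen H).
    apply: le_trans tle (tlb _ _); rewrite bridge_ratiosE; left.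
    exists G, (lgap H); split=> //; left; exists H; split=> //.
    exact: rbridge_cond0 cK gG (ltW eps0) Hc GH.
  have : t <= (lgap H - rgap G) / glen H.
    apply: tlb; rewrite bridge_ratiosE; right.
    exists H, (rgap G); split=> //; left; exists G; split=> //.
    exact: lbridge_cond0_of_rbridge cK gG Hc HG'.
  rewrite ler_pdivlMr ?(glen_gt0 cK gH) // ler_pdivlMr // => tH.
  nra.
- apply: le_trans tle (tlb _ _); rewrite bridge_ratiosE; left.
  exists G, (sup K); split=> //; right; split=> // H0c.
  by apply: nH; apply: exists_rbridge_cond_le cK gG (ltW eps0) eps1 H0c.
Qed.

Lemma rbridge_ratio_upper {K eps r} :
  closed K -> has_ubound K -> 0 <= eps < 1 ->
  rbridge_ratios K 0 r -> exists2 r', rbridge_ratios K eps r' & r' <= r.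
Proof.
move=> cK ubK /andP[eps0 eps1] [G [v [gG Gv ->]]].
have G0 := glen_gt0 cK gG.
have [[H Hc]|nH] := pselect (exists H, rbridge_cond K eps G H).
- exists ((lgap H - rgap G) / glen G).
    by exists G, (lgap H); split=> //; left; exists H.
  rewrite ler_pM2r ?invr_gt0 // lerD2r.
  have [gH HG cH Hmin] := Hc.
  case: Gv => [[H0 [[gH0 H0G cH0 _] ->]] | [_ ->]]; last first.
    by apply: (ub_le_sup ubK); exact: (gap_lgap_mem cK gH).
  rewrite leNgt; apply/negP => H0H.
  (* H0 would be a gap between G and H at least as long as G. *)
  have : glen H0 < (1 - eps) * glen G.
    apply: Hmin => // y H0y; apply/andP; split; first exact: H0G.
    have /(gapP cK gH0) /andP[_ ?] := H0y.
    have := gap_disjoint cK gH0 gH H0H; lra.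
  rewrite subr0 mul1r in cH0; nra.
- exists ((sup K - rgap G) / glen G).
    by exists G, (sup K); split=> //; right.
  case: Gv => [[H0 [H0c ->]] | [_ ->]] //.
  exfalso; apply: nH; apply: exists_rbridge_cond_le cK gG eps0 eps1 _.
  by exists H0.
Qed.

Section ClosedBounded.
Context {K : set R}.
Hypotheses (cK : closed K) (bK : bounded_set K).

Let cNK : closed (-%R @` K) := closedN cK.
Let ubK : has_ubound K := bounded_set_has_ubound bK.
Let ubNK : has_ubound (-%R @` K) := bounded_set_has_ubound (bounded_setN bK).

Lemma bridge_ratios_ge0 eps : lbound (bridge_ratios K eps) 0.
Proof.
move=> r; rewrite bridge_ratiosE lbridge_ratiosN => -[].
  exact: rbridge_ratio_ge0 cK ubK.
exact: rbridge_ratio_ge0 cNK ubNK.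
Qed.

Lemma thickness_le eps r : bridge_ratios K eps r -> thickness K eps <= r.
Proof.
by move=> ?; apply: ge_inf => //; exists 0; exact: bridge_ratios_ge0.
Qed.

Lemma thickness_ge0 eps : 0 <= thickness K eps.
Proof.
rewrite /thickness; have [->|/set0P ne] := eqVneq (bridge_ratios K eps) set0.
  by rewrite inf0.
exact: lb_le_inf ne (bridge_ratios_ge0 eps).
Qed.

Lemma thickness_lower {eps} : 0 < eps < 1 ->
  (1 - eps) * thickness K 0 <= thickness K eps.
Proof.
move=> eps01; have t0 := thickness_ge0 0.
have [[G gG]|nG] := pselect (exists G, is_gap K G); last first.
  by rewrite !thickness_nogap ?mulr0.
have tlb : lbound (bridge_ratios K 0) (thickness K 0) by move=> ? /thickness_le.
apply: lb_le_inf (bridge_ratios_nonempty eps gG) _ => r.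
rewrite bridge_ratiosE lbridge_ratiosN => -[].
  exact: rbridge_ratio_lower cK eps01 t0 tlb.
by apply: rbridge_ratio_lower cNK eps01 t0 _; rewrite bridge_ratiosN.
Qed.

Lemma thickness_upper {eps} : 0 <= eps < 1 -> thickness K eps <= thickness K 0.
Proof.
move=> eps01.
have [[G gG]|nG] := pselect (exists G, is_gap K G); last first.
  by rewrite !thickness_nogap.
apply: lb_le_inf (bridge_ratios_nonempty 0 gG) _ => r.
rewrite bridge_ratiosE lbridge_ratiosN => -[].
  move=> /(rbridge_ratio_upper cK ubK eps01) [r' r'_ratio r'r].
  by apply: le_trans r'r; apply: thickness_le; rewrite bridge_ratiosE; left.
move=> /(rbridge_ratio_upper cNK ubNK eps01) [r' r'_ratio r'r].
apply: le_trans r'r; apply: thickness_le.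
by rewrite bridge_ratiosE lbridge_ratiosN; right.
Qed.

Lemma thickness_cvg : thickness K eps @[eps --> 0^'+] --> thickness K 0.
Proof.
apply: (@squeeze_cvgr _ _ _ _
  (fun eps => (1 - eps) * thickness K 0) (fun=> thickness K 0)).
- near=> eps; have eps01 : 0 < eps < 1.
    apply/andP; split; near: eps; first exact: nbhs_right_gt.
    exact: nbhs_right_lt.
  rewrite thickness_lower // thickness_upper //.
  by case/andP: eps01 => /ltW -> ->.
- apply: cvg_at_right_filter.
  rewrite -[X in _ --> X]mul1r; apply: cvgMr_tmp.
  rewrite -[X in _ --> X]subr0.
  by apply: cvgB; [exact: cvg_cst | exact: cvg_id].
- exact: cvg_cst.
Unshelve. all: by end_near.
Qed.

End ClosedBounded.

End Thickness.

Theorem mainTheorem13 (R : realType) (C : set R) :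
  cantor_set C ->
  (forall eps : R, 0 < eps < 1 ->
     (1 - eps) ^+ 2 * thickness C 0 <= thickness C eps /\
     thickness C eps <= thickness C 0) /\
  (thickness C eps @[eps --> 0^'+] --> thickness C 0).
Proof.
move=> [_ cptC _ _].
have cC := compact_closed (@Rhausdorff R) cptC.
have bC := compact_bounded cptC.
split; last exact: thickness_cvg cC bC.
move=> eps /[dup] eps01 /andP[eps0 eps1].
split; last by rewrite thickness_upper // ltW.
apply: le_trans (thickness_lower cC bC eps01).
have t0 : 0 <= thickness C 0 := thickness_ge0 cC bC 0.
rewrite expr2 -mulrA; apply: ler_piMl; last by lra.
by rewrite mulr_ge0 // subr_ge0 ltW.
Qed.
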